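(* Let $p$ be an odd prime, $d \geqslant 2$, and $V$ a $d$-dimensional vector space over $\mathbb{F}_p$ with basis $\mathbf{b}_1,\ldots,\mathbf{b}_d$. Let $G = \mathrm{Sym}(V)$, $H = \mathrm{AGL}(V)$, and let $T$ be the subgroup of $\mathrm{GL}(V)$ of all matrices that are diagonal with respect to $\mathbf{b}_1,\ldots,\mathbf{b}_d$. Let $l_1 = d(d+1)/2 - 1$. Then there exist subgroups $K_1,\ldots,K_{l_1}$ of $\mathrm{GL}(V)$, each the setwise stabiliser in $\mathrm{GL}(V)$ of a linear subspace of $V$, such that \[ G > H > K_1 > K_1 \cap K_2 > \cdots > \bigcap_{i=1}^{l_1} K_i = T. \]
   Context: $\mathrm{AGL}(V)$ is the group of invertible affine transformations $\mathbf{v} \mapsto \mathbf{v}g + \mathbf{u}$ ($g \in \mathrm{GL}(V)$, $\mathbf{u} \in V$) of $V$, regarded as a subgroup of $\mathrm{Sym}(V)$. All inclusions $>$ are strict. *)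

From HB Require Import structures.
From mathcomp Require Import all_boot all_order all_algebra all_fingroup.
Set Implicit Arguments. Unset Strict Implicit. Unset Printing Implicit Defensive.
Import GRing.Theory.
Local Open Scope ring_scope.

(* V = F_p^d as row vectors 'rV['F_p]_d, basis b_1..b_d = standard basis.
   Matrices act on the right: v |-> v *m g. *)
Section Defs.
Variables (p d : nat).

Definition vec := 'rV['F_p]_d.

Definition SymV : {set {perm vec}} := [set: {perm vec}].

Definition AGLV : {set {perm vec}} :=
  [set s : {perm vec} | [exists g : 'M['F_p]_d, exists u : vec,
      (g \in unitmx) && [forall v : vec, s v == v *m g + u]]].

Definition GLV : {set {perm vec}} :=
  [set s : {perm vec} | [exists g : 'M['F_p]_d,
      (g \in unitmx) && [forall v : vec, s v == v *m g]]].

Definition TV : {set {perm vec}} :=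
  [set s : {perm vec} | [exists g : 'M['F_p]_d,
      [&& g \in unitmx,
          [forall i, forall j, (i != j) ==> (g i j == 0)] &
          [forall v : vec, s v == v *m g]]]].

Definition subsp (W : 'M['F_p]_d) : {set vec} := [set v : vec | (v <= W)%MS].

Definition GLstab (W : 'M['F_p]_d) : {set {perm vec}} :=
  [set s in GLV | s @: subsp W == subsp W].

End Defs.

From HB Require Import structures.
From mathcomp Require Import all_boot all_order all_algebra all_fingroup.
From mathcomp Require Import zify.

(* The stabiliser in GL(V) of the span of the basis vectors b_k, k in an
   interval [a, b], consists of the g with g_xy = 0 whenever x lies in [a, b]
   and y does not.  Take all intervals except [0, d-1] (whose stabiliser is
   GL(V) itself), in lexicographic order.  Every earlier interval containing b
   also contains y := b + 1 (if a = 0) or y := a - 1 (if a > 0), whereas [a, b]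
   does not; so the transvection 1 + E_by lies in all earlier stabilisers but
   not in the new one.  Two distinct coordinates are always separated by one of
   the intervals, so the intersection of all the stabilisers is T. *)

Set Implicit Arguments. Unset Strict Implicit. Unset Printing Implicit Defensive.
Import GRing.Theory.

Definition ltlex (I J : nat * nat) := (I.1 < J.1) || (I.1 == J.1) && (I.2 < J.2).

Lemma ltlex_trans : transitive ltlex.
Proof. by move=> [? ?] [? ?] [? ?]; rewrite /ltlex /=; lia. Qed.

Lemma ltlex_irr : irreflexive ltlex.
Proof. by move=> [? ?]; rewrite /ltlex /=; lia. Qed.

Lemma sorted_allpairs_ltlex (s : seq nat) (t : nat -> seq nat) :
  sorted ltn s -> (forall a, sorted ltn (t a)) ->
  sorted ltlex [seq (a, b) | a <- s, b <- t a].
Proof.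
move=> + t_sorted; rewrite (sorted_pairwise ltn_trans) (sorted_pairwise ltlex_trans).
elim: s => //= a s IHs /andP[lt_a_s /IHs {}IHs].
rewrite pairwise_cat pairwise_map IHs andbT; apply/andP; split.
  apply/allrelP => _ _ /mapP[b _ ->] /allpairsPdep[a' [b' [a's _ ->]]].
  by rewrite /ltlex /= (allP lt_a_s).
apply: sub_pairwise (_ : pairwise ltn (t a)) => [b c|].
  by rewrite /ltlex /= eqxx ltnn.
by rewrite -(sorted_pairwise ltn_trans).
Qed.

Definition in_interval (I : nat * nat) (x : nat) := I.1 <= x <= I.2.

Definition intervals d : seq (nat * nat) :=
  rem (0, d.-1) [seq (a, b) | a <- iota 0 d, b <- iota a (d - a)].

Lemma intervals_sorted d : sorted ltlex (intervals d).
Proof.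
apply: (subseq_sorted ltlex_trans (rem_subseq _ _)).
by apply: sorted_allpairs_ltlex => [|a]; apply: iota_ltn_sorted.
Qed.

Lemma mem_intervals d a b :
  ((a, b) \in intervals d) = (a <= b < d) && ((a, b) != (0, d.-1)).
Proof.
rewrite mem_rem_uniq ?inE; last first.
  apply: (sorted_uniq ltlex_trans ltlex_irr).
  by apply: sorted_allpairs_ltlex => [|a']; apply: iota_ltn_sorted.
rewrite andbC; congr (_ && _); apply/allpairsPdep/idP => [[a' [b' []]]|].
  by rewrite !mem_iota => ? ? [-> ->]; lia.
by move=> ab; exists a, b; rewrite !mem_iota; split => //; lia.
Qed.

Lemma size_intervals d : 0 < d -> size (intervals d) = (d * (d + 1)) %/ 2 - 1.
Proof.
move=> d_gt0; rewrite size_rem; last first.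
  by apply/allpairsPdep; exists 0, d.-1; rewrite !mem_iota; split => //; lia.
rewrite size_allpairs_dep sumnE big_map.
rewrite -[in iota 0 d](subn0 d) big_nat_rev /=.
rewrite (eq_big_nat _ _ (F2 := succn)) => [|i /andP[_ lt_id]]; last first.
  by rewrite size_iota; lia.
rewrite -[X in X.-1]add0n -(big_nat_recl d 0 (fun i => i)) // bin2_sum bin2.
by rewrite -divn2 mulnC addn1 subn1.
Qed.

Lemma intervals_separate d x y : x < d -> y < d -> x != y ->
  exists2 I, I \in intervals d & in_interval I x && ~~ in_interval I y.
Proof.
move=> x_lt_d y_lt_d; case: ltngtP => // [x_lt_y | y_lt_x] _.
  by exists (0, x); rewrite ?mem_intervals ?xpair_eqE /in_interval /=; lia.
by exists (x, x); rewrite ?mem_intervals ?xpair_eqE /in_interval /=; lia.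
Qed.

Lemma intervals_witness d I : I \in intervals d ->
  exists x y, [/\ x < d, y < d, in_interval I x, ~~ in_interval I y &
    forall J, ltlex J I -> in_interval J x -> in_interval J y].
Proof.
case: I => a b; rewrite mem_intervals xpair_eqE => ab_int.
exists b, (if a == 0 then b.+1 else a.-1).
by case: eqVneq => [a0|a_neq0]; split=> [||||[c e]]; rewrite /ltlex /in_interval /=; lia.
Qed.

Section LinearGroups.
Variables p d : nat.
Local Notation V := (vec p d).
Local Open Scope ring_scope.
Implicit Types (S : pred 'I_d) (g : 'M['F_p]_d) (v : V).

Definition coord_mx (S : pred 'I_d) : 'M['F_p]_d := diag_mx (\row_j (S j)%:R).

Lemma coord_subspP S v :
  reflect (forall j, ~~ S j -> v 0 j = 0) (v \in subsp (coord_mx S)).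
Proof.
rewrite inE; apply: (iffP submxP) => [[u ->] j /negbTE Sj | v_supp].
  by rewrite mul_mx_diag !mxE Sj mulr0.
exists v; apply/rowP => j; rewrite mul_mx_diag !mxE.
by case: (boolP (S j)) => [_|/v_supp ->]; rewrite ?mulr1 ?mul0r.
Qed.

Definition mxperm g (gu : g \in unitmx) : {perm V} := perm (can_inj (mulmxK gu)).

Lemma mxpermE g (gu : g \in unitmx) v : mxperm gu v = v *m g.
Proof. by rewrite permE. Qed.

Lemma mxperm_GL g (gu : g \in unitmx) : mxperm gu \in GLV p d.
Proof.
by rewrite inE; apply/existsP; exists g; rewrite gu; apply/forallP => v; rewrite mxpermE.
Qed.

Lemma GLVP s : s \in GLV p d -> exists g (gu : g \in unitmx), s = mxperm gu.
Proof.
rewrite inE => /existsP[g /andP[gu /forallP s_act]].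
by exists g, gu; apply/permP => v; rewrite mxpermE; apply/eqP.
Qed.

Lemma mxperm_stabP S g (gu : g \in unitmx) :
  reflect (forall x y, S x -> ~~ S y -> g x y = 0) (mxperm gu \in GLstab (coord_mx S)).
Proof.
rewrite inE mxperm_GL eqEcard card_imset ?leqnn ?andbT /=; last exact: perm_inj.
apply: (iffP subsetP) => [g_stab x y Sx Sy | g_supp].
  have /g_stab : mxperm gu (delta_mx 0 x) \in mxperm gu @: subsp (coord_mx S).
    apply/imset_f/coord_subspP => j Sj; rewrite mxE.
    by case: (eqVneq j x) Sj => [->|]; rewrite ?Sx ?andbF.
  by move=> /coord_subspP/(_ y Sy); rewrite mxpermE -rowE mxE.
move=> _ /imsetP[v /coord_subspP v_supp ->]; apply/coord_subspP => y Sy.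
rewrite mxpermE mxE big1 // => k _.
have [Sk|/v_supp ->] := boolP (S k); last by rewrite mul0r.
by rewrite g_supp ?mulr0.
Qed.

Lemma diag_mxperm_stab S g (gu : g \in unitmx) :
  is_diag_mx g -> mxperm gu \in GLstab (coord_mx S).
Proof.
move=> /is_diag_mxP g_diag; apply/mxperm_stabP => x y Sx Sy.
by apply: g_diag; apply: contraNneq Sy => /val_inj <-.
Qed.

Lemma mxperm_TV g (gu : g \in unitmx) : (mxperm gu \in TV p d) = is_diag_mx g.
Proof.
rewrite inE; apply/existsP/is_diag_mxP.
  move=> [g' /and3P[_ g'_diag /forallP g'_act]].
  have -> : g = g' by apply/eqP/mulmxP => v; rewrite -mxpermE; apply/eqP.
  by move=> i j ij; apply/eqP; move/forallP/(_ i)/forallP/(_ j)/implyP: g'_diag; apply.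
move=> g_diag; exists g; rewrite gu; apply/and3P; split=> //.
  by apply/'forall_'forall_implyP => i j ij; rewrite g_diag.
by apply/forallP => v; rewrite mxpermE.
Qed.

Lemma GLstab_sub_GLV (W : 'M['F_p]_d) : GLstab W \subset GLV p d.
Proof. by apply/subsetP => s; rewrite inE => /andP[]. Qed.

Lemma TV_sub_GLV : TV p d \subset GLV p d.
Proof.
apply/subsetP => s; rewrite !inE => /existsP[g /and3P[gu _ s_act]].
by apply/existsP; exists g; rewrite gu.
Qed.

Definition transvection (x y : 'I_d) : 'M['F_p]_d := 1%:M + delta_mx x y.

Lemma transvection_unit x y : x != y -> transvection x y \in unitmx.
Proof.
move=> xy; apply: (proj1 (@mulmx1_unit _ _ _ (1%:M - delta_mx x y) _)).
by rewrite mulmxDl mul1mx mulmxBr mulmx1 mul_delta_mx_0 1?eq_sym // subr0 subrK.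
Qed.

Lemma transvection_stab S x y (xy : x != y) :
  (mxperm (transvection_unit xy) \in GLstab (coord_mx S)) = (S x ==> S y).
Proof.
apply/mxperm_stabP/implyP => [t_supp Sx | Sxy a b Sa Sb].
  apply/contraT => Sy; move: (t_supp x y Sx Sy) => /eqP.
  by rewrite !mxE (negbTE xy) !eqxx add0r oner_eq0.
rewrite !mxE; have /negbTE -> : a != b by apply: contraNneq Sb => <-.
rewrite add0r; case: eqVneq => [ax|] //=; case: eqVneq => [by_|] //=.
by move: Sb; rewrite by_ Sxy // -ax.
Qed.

Lemma GLV_sub_AGLV : GLV p d \subset AGLV p d.
Proof.
apply/subsetP => _ /GLVP[g [gu ->]]; rewrite inE; apply/existsP; exists g.
by apply/existsP; exists 0; rewrite gu; apply/forallP => v; rewrite mxpermE addr0.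
Qed.

Definition translation (u : V) : {perm V} := perm (addIr u).

Lemma translation_AGLV u : translation u \in AGLV p d.
Proof.
rewrite inE; apply/existsP; exists 1%:M; apply/existsP; exists u.
by rewrite unitmx1; apply/forallP => v; rewrite permE mulmx1.
Qed.

Lemma translation_GLV u : (translation u \in GLV p d) = (u == 0).
Proof.
apply/idP/eqP => [/GLVP[g [gu /permP/(_ 0)]] | ->].
  by rewrite permE mxpermE mul0mx add0r.
suff -> : translation 0 = mxperm (unitmx1 _ _) by apply: mxperm_GL.
by apply/permP => v; rewrite permE mxpermE mulmx1 addr0.
Qed.

Lemma GLV_proper_AGLV : (0 < d)%N -> GLV p d \proper AGLV p d.
Proof.
move=> d_gt0; apply/properP; split; first exact: GLV_sub_AGLV.
exists (translation (delta_mx 0 (Ordinal d_gt0))); first exact: translation_AGLV.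
rewrite translation_GLV; apply/eqP => /rowP/(_ (Ordinal d_gt0)) /eqP.
by rewrite !mxE !eqxx oner_eq0.
Qed.

Lemma AGLV_parallelogram s u v : s \in AGLV p d -> s u + s v = s (u + v) + s 0.
Proof.
rewrite inE => /existsP[g /existsP[w /andP[_ /forallP s_act]]].
rewrite !(eqP (s_act _)) mulmxDl mul0mx add0r.
by rewrite addrACA addrA.
Qed.

Lemma AGLV_proper_SymV : prime p -> odd p -> (1 < d)%N -> AGLV p d \proper SymV p d.
Proof.
move=> p_pr p_odd d_gt1.
pose i0 : 'I_d := Ordinal (ltnW d_gt1); pose i1 : 'I_d := Ordinal d_gt1.
pose e i : V := delta_mx 0 i.
have neq_at (u v : V) j : u 0 j != v 0 j -> u != v by apply: contraNneq => ->.
have [i01 i10] : (i0 == i1) = false /\ (i1 == i0) = false by [].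
have e_neq0 i : 0 != e i.
  by apply: (neq_at _ _ i); rewrite !mxE !eqxx.
have e01 : e i0 != e i1.
  by apply: (neq_at _ _ i1); rewrite !mxE !eqxx i10.
have e0_neq : 0 != e i0 + e i1.
  by apply: (neq_at _ _ i0); rewrite !mxE !eqxx i01.
have e1_neq : e i0 != e i0 + e i1.
  by apply: (neq_at _ _ i1); rewrite !mxE !eqxx i10.
(* The transposition (0 e_0) fixes e_1 and e_0 + e_1; were it affine, the
   parallelogram rule at e_0, e_1 would give 2 e_0 = 0. *)
rewrite /SymV properT; apply/negP => /eqP AGL_Sym.
have /(@AGLV_parallelogram _ (e i0) (e i1)) : tperm 0 (e i0) \in AGLV p d.
  by rewrite AGL_Sym inE.
rewrite tpermR tpermL !tpermD // => /rowP/(_ i0)/eqP.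
rewrite !mxE !eqxx /= !addr0 eq_sym -mulr2n -(dvdn_pcharf (pchar_Fp p_pr)).
by rewrite dvdn_prime2 // => /eqP p2; rewrite p2 in p_odd.
Qed.
End LinearGroups.

Section IntervalChain.
Variables p d : nat.

Definition interval_mx (I : nat * nat) : 'M['F_p]_d :=
  coord_mx p [pred k : 'I_d | in_interval I k].

Definition interval_stab_cap n : {set {perm vec p d}} :=
  \bigcap_(i < n) GLstab (interval_mx (nth (0, 0) (intervals d) i)).

Lemma interval_stab_cap_proper j : j < size (intervals d) ->
  interval_stab_cap j.+1 \proper interval_stab_cap j.
Proof.
move=> j_lt; rewrite /interval_stab_cap big_ord_recr /=; apply: properIl.
have [x [y [x_lt y_lt x_in y_out earlier]]] := intervals_witness (mem_nth (0, 0) j_lt).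
have xy : Ordinal x_lt != Ordinal y_lt by apply: contraNneq y_out => -[<-].
apply/subsetPn; exists (mxperm (transvection_unit p xy)).
  apply/bigcapP => i _; rewrite transvection_stab; apply/implyP; apply: earlier.
  apply: (sorted_ltn_nth ltlex_trans (0, 0) (intervals_sorted d)); rewrite ?inE //.
  exact: ltn_trans j_lt.
by rewrite transvection_stab /= x_in (negbTE y_out).
Qed.

Lemma interval_stab_cap_TV : 1 < d -> interval_stab_cap (size (intervals d)) = TV p d.
Proof.
move=> d_gt1; apply/setP => s; apply/idP/idP => [/bigcapP s_cap | s_TV].
  have s_stab m : m < size (intervals d) ->
      s \in GLstab (interval_mx (nth (0, 0) (intervals d) m)).
    by move=> m_lt; apply: (s_cap (Ordinal m_lt)).
  have [g [gu s_eq]] : exists g (gu : g \in unitmx), s = mxperm gu.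
    by apply/GLVP/(subsetP (GLstab_sub_GLV _))/(s_stab 0); rewrite size_intervals; lia.
  subst s; rewrite mxperm_TV; apply/is_diag_mxP => x y.
  case/(intervals_separate (ltn_ord x) (ltn_ord y)) => I /(nthP (0, 0))[m m_lt <-].
  by case/andP => x_in y_out; move/mxperm_stabP: (s_stab m m_lt); apply.
have [g [gu s_eq]] := GLVP (subsetP (TV_sub_GLV p d) s s_TV).
move: s_TV; rewrite s_eq mxperm_TV => g_diag.
by apply/bigcapP => i _; apply: diag_mxperm_stab.
Qed.
End IntervalChain.

Theorem lemma3p4 (p d : nat) :
  prime p -> odd p -> (2 <= d)%N ->
  let l1 := ((d * (d + 1)) %/ 2 - 1)%N in
  exists W : nat -> 'M['F_p]_d,
    let K := fun i => GLstab (W i) in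
    [/\ AGLV p d \proper SymV p d,
        K 1%N \proper AGLV p d,
        (forall j : nat, (1 <= j < l1)%N ->
           \bigcap_(1 <= i < j.+2) K i \proper \bigcap_(1 <= i < j.+1) K i) &
        \bigcap_(1 <= i < l1.+1) K i = TV p d].
Proof.
move=> p_pr p_odd d_gt1 l1; have d_gt0 : (0 < d)%N := ltnW d_gt1.
have size_l1 : size (intervals d) = l1 by rewrite size_intervals.
exists (fun i => interval_mx p d (nth (0, 0) (intervals d) i.-1)) => K; split.
- exact: AGLV_proper_SymV.
- exact: sub_proper_trans (GLstab_sub_GLV _) (GLV_proper_AGLV p d_gt0).
- move=> j /andP[_ j_lt]; rewrite /K !big_add1 !big_mkord /=.
  by apply: interval_stab_cap_proper; rewrite size_l1.
- by rewrite /K big_add1 big_mkord /= -size_l1; apply: interval_stab_cap_TV.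
Qed.
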